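(* Let $\mathcal V$ be a variety of algebras of type $F$. The variety $\mathcal V_\tau$ satisfies the Congruence Extension Property if and only if $\mathcal V$ satisfies the Congruence Extension Property.
   Context: A state-morphism on an algebra $\mathbf A$ of type $F$ is an endomorphism $\tau$ of $\mathbf A$ with $\tau\circ\tau=\tau$; $(\mathbf A,\tau)$ is a state-morphism algebra (type $F$ plus one unary operation), and $\mathcal V_\tau$ is the variety of all state-morphism algebras $(\mathbf A,\tau)$ with $\mathbf A\in\mathcal V$. An algebra $\mathbf B$ has the Congruence Extension Property (CEP) if for every algebra $\mathbf A$ having $\mathbf B$ as a subalgebra and every congruence $\theta$ of $\mathbf B$ there is a congruence $\phi$ of $\mathbf A$ with $\theta=(B\times B)\cap\phi$; a variety has the CEP if all its members have it. *)

From mathcomp Require Import all_boot.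
Set Implicit Arguments. Unset Strict Implicit. Unset Printing Implicit Defensive.

Record signature := Signature {
  op_sym : Type;
  arity : op_sym -> nat
}.

Record algebra (S : signature) := Algebra {
  carrier :> Type;
  interp : forall f : op_sym S, ('I_(arity f) -> carrier) -> carrier
}.
Arguments interp {S} a f _ : rename.

Definition is_hom (S : signature) (A B : algebra S) (h : A -> B) : Prop :=
  forall (f : op_sym S) (a : 'I_(arity f) -> A),
    h (interp A f a) = interp B f (fun i => h (a i)).

(** B is (isomorphic to) a subalgebra of A: an injective homomorphism B -> A. *)
Definition is_embedding (S : signature) (B A : algebra S) (e : B -> A) : Prop :=
  is_hom e /\ (forall x y, e x = e y -> x = y).

Definition is_congruence (S : signature) (A : algebra S) (th : A -> A -> Prop)
  : Prop :=
  [/\ (forall x, th x x),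
      (forall x y, th x y -> th y x),
      (forall x y z, th x y -> th y z -> th x z) &
      (forall (f : op_sym S) (a b : 'I_(arity f) -> A),
          (forall i, th (a i) (b i)) -> th (interp A f a) (interp A f b))].

Inductive term (S : signature) : Type :=
  | Var : nat -> term S
  | App : forall f : op_sym S, ('I_(arity f) -> term S) -> term S.

Fixpoint eval_term (S : signature) (A : algebra S) (v : nat -> A) (t : term S)
  : A :=
  match t with
  | Var n => v n
  | App f args => interp A f (fun i => eval_term v (args i))
  end.

Definition satisfies (S : signature) (A : algebra S) (e : term S * term S)
  : Prop := forall v : nat -> A, eval_term v e.1 = eval_term v e.2.

(** A variety: a class of algebras of type S defined by a set of identities
    (equivalently, by Birkhoff's theorem, closed under H, S, P). *)
Definition is_variety (S : signature) (V : algebra S -> Prop) : Prop :=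
  exists E : term S * term S -> Prop,
    forall A : algebra S, V A <-> (forall e, E e -> satisfies A e).

Definition CEP_alg (S : signature) (K : algebra S -> Prop) (B : algebra S)
  : Prop :=
  forall (A : algebra S) (e : B -> A), K A -> is_embedding e ->
  forall th : B -> B -> Prop, is_congruence th ->
  exists phi : A -> A -> Prop, is_congruence phi /\
    (forall x y : B, th x y <-> phi (e x) (e y)).

Definition CEP (S : signature) (K : algebra S -> Prop) : Prop :=
  forall B : algebra S, K B -> CEP_alg K B.

Definition sig_tau (S : signature) : signature :=
  {| op_sym := option (op_sym S);
     arity := fun o => match o with Some f => arity f | None => 1%N end |}.

Definition reduct (S : signature) (A : algebra (sig_tau S)) : algebra S :=
  {| carrier := carrier A;
     interp := fun f a => @interp (sig_tau S) A (Some f) a |}.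

Definition tau_op (S : signature) (A : algebra (sig_tau S)) (x : A) : A :=
  @interp (sig_tau S) A None (fun _ => x).

Definition is_state_morphism (S : signature) (A : algebra S) (t : A -> A)
  : Prop := @is_hom S A A t /\ (forall x, t (t x) = t x).

Definition V_tau (S : signature) (V : algebra S -> Prop)
  (A : algebra (sig_tau S)) : Prop :=
  V (reduct A) /\ @is_state_morphism S (reduct A) (@tau_op S A).

(* A congruence of an F-algebra becomes a congruence of a state-morphism
   algebra (A, tau) after intersecting it with its preimage under tau: tau is
   an endomorphism, so the result is still an F-congruence, and tau is
   idempotent, so the result is closed under tau. A congruence of a
   state-morphism subalgebra is already tau-closed, so this intersection does
   not change its restriction. Conversely every algebra of V is a member of
   V_tau when equipped with the identity, which has the same congruences. *)
From Stdlib Require Import FunctionalExtensionality.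
From mathcomp Require Import all_boot.
Set Implicit Arguments. Unset Strict Implicit. Unset Printing Implicit Defensive.

Section StateMorphismCEP.

Variable S : signature.

Lemma interp_tau_op (A : algebra (sig_tau S)) (a : 'I_1 -> A) :
  @interp (sig_tau S) A None a = tau_op (a ord0).
Proof.
rewrite /tau_op; congr (interp A None _).
by apply: functional_extensionality => i; rewrite (ord1 i).
Qed.

Lemma hom_tau_op (A B : algebra (sig_tau S)) (h : A -> B) (x : A) :
  is_hom h -> h (tau_op x) = tau_op (h x).
Proof. by move=> hom_h; rewrite /tau_op (hom_h None). Qed.

Lemma congruence_tau_op (A : algebra (sig_tau S)) (th : A -> A -> Prop) x y :
  is_congruence th -> th x y -> th (tau_op x) (tau_op y).
Proof. by case=> _ _ _ compat thxy; apply: (compat None). Qed.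

Lemma is_hom_reduct (A B : algebra (sig_tau S)) (h : A -> B) :
  is_hom h -> @is_hom S (reduct A) (reduct B) h.
Proof. by move=> hom_h f; apply: (hom_h (Some f)). Qed.

Lemma is_embedding_reduct (A B : algebra (sig_tau S)) (e : A -> B) :
  is_embedding e -> @is_embedding S (reduct A) (reduct B) e.
Proof. by case=> hom_e inj_e; split=> //; apply: is_hom_reduct. Qed.

Lemma is_congruence_reduct (A : algebra (sig_tau S)) (th : A -> A -> Prop) :
  is_congruence th -> @is_congruence S (reduct A) th.
Proof.
by case=> refl sym trans compat; split=> // f; apply: (compat (Some f)).
Qed.

Definition tau_closure (A : algebra (sig_tau S)) (phi : A -> A -> Prop)
    (x y : A) : Prop :=
  phi x y /\ phi (tau_op x) (tau_op y).

Lemma is_congruence_tau_closure (A : algebra (sig_tau S))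
    (phi : A -> A -> Prop) :
  @is_state_morphism S (reduct A) (@tau_op S A) ->
  @is_congruence S (reduct A) phi -> is_congruence (tau_closure phi).
Proof.
case=> tau_hom tau_idem [refl sym trans compat]; split.
- by move=> x; split.
- by move=> x y [phixy phitxy]; split; apply: sym.
- move=> x y z [phixy phitxy] [phiyz phityz].
  by split; [apply: trans phiyz | apply: trans phityz].
- case=> [f|] a b phiab; last first.
    rewrite !interp_tau_op; have [_ phitab] := phiab ord0.
    by split=> //; rewrite !tau_idem.
  have phi_args i : phi (a i) (b i) by case: (phiab i).
  have phit_args i : phi (tau_op (a i)) (tau_op (b i)) by case: (phiab i).
  split; first exact: (compat f).
  by rewrite /tau_closure (tau_hom f a) (tau_hom f b); apply: (compat f).
Qed.

Lemma tau_closure_restrict (A B : algebra (sig_tau S)) (e : B -> A)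
    (th : B -> B -> Prop) (phi : A -> A -> Prop) :
  is_hom e -> is_congruence th ->
  (forall x y, th x y <-> phi (e x) (e y)) ->
  forall x y, th x y <-> tau_closure phi (e x) (e y).
Proof.
move=> hom_e cong_th ext x y; split; last by case=> /ext.
move=> thxy; split; first by apply/ext.
rewrite -!(hom_tau_op _ hom_e); apply/ext; exact: congruence_tau_op.
Qed.

Lemma CEP_V_tau (V : algebra S -> Prop) : CEP V -> CEP (V_tau V).
Proof.
move=> cepV B [VB _] A e [VA tauA] emb_e th cong_th.
have [phi [cong_phi ext]] := cepV _ VB (reduct A) e VA
  (is_embedding_reduct emb_e) th (is_congruence_reduct cong_th).
exists (tau_closure phi); split; first exact: is_congruence_tau_closure.
by apply: tau_closure_restrict => //; case: emb_e.
Qed.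

Definition id_tau_algebra (B : algebra S) : algebra (sig_tau S) :=
  @Algebra (sig_tau S) B
    (fun o => match o return ('I_(@arity (sig_tau S) o) -> B) -> B with
              | Some f => interp B f
              | None => fun a => a ord0 end).

Lemma V_tau_id_tau_algebra (V : algebra S -> Prop) (B : algebra S) :
  V B -> V_tau V (id_tau_algebra B).
Proof. by case: B => carrierB interpB VB; split. Qed.

Lemma is_embedding_id_tau_algebra (B A : algebra S) (e : B -> A) :
  is_embedding e ->
  @is_embedding (sig_tau S) (id_tau_algebra B) (id_tau_algebra A) e.
Proof. by case=> hom_e inj_e; split=> //; case=> [f|] a //=; apply: hom_e. Qed.

Lemma is_congruence_id_tau_algebra (B : algebra S) (th : B -> B -> Prop) :
  is_congruence th -> @is_congruence (sig_tau S) (id_tau_algebra B) th.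
Proof.
case=> refl sym trans compat; split=> //.
by case=> [f|] a b thab //=; apply: compat.
Qed.

Lemma CEP_of_CEP_V_tau (V : algebra S -> Prop) : CEP (V_tau V) -> CEP V.
Proof.
move=> cepVt B VB A e VA emb_e th cong_th.
have [phi [[refl sym trans compat] ext]] :=
  cepVt _ (V_tau_id_tau_algebra VB) (id_tau_algebra A) e
    (V_tau_id_tau_algebra VA) (is_embedding_id_tau_algebra emb_e)
    th (is_congruence_id_tau_algebra cong_th).
by exists phi; split=> //; split=> // f; apply: (compat (Some f)).
Qed.

End StateMorphismCEP.

Theorem theorem4p7 (S : signature) (V : algebra S -> Prop) :
  is_variety V -> (CEP (V_tau V) <-> CEP V).
Proof. by move=> _; split; [apply: CEP_of_CEP_V_tau | apply: CEP_V_tau]. Qed.
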